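(* On $\mathbb{R}^2$ with standard coordinates $(x,y)$, let $E_1:=x\frac{\partial}{\partial x}+\frac{\partial}{\partial y}$, $E_2:=-\frac{\partial}{\partial x}$, with dual coframe $E^1=dy$, $E^2=-dx+x\,dy$, and let $F\colon T\mathbb{R}^2\to\mathbb{R}$ be the Randers-type Finsler function $F=\sqrt{4(E^1)^2+12(E^2)^2}-E^1=\sqrt{4(dy)^2+12(-dx+x\,dy)^2}-dy$. Let $\nabla$ be the covariant derivative on $\mathbb{R}^2$ with $\nabla E_1=\nabla E_2=0$. Then: (i) $F$ is holonomy invariant with respect to $\nabla$, so $(\mathbb{R}^2,F)$ is a generalized Berwald manifold; (ii) $\nabla$ is the only covariant derivative on $\mathbb{R}^2$ with respect to which $F$ is holonomy invariant; (iii) the torsion of $\nabla$ satisfies $T^\nabla(E_1,E_2)=-\frac{\partial}{\partial x}\neq0$. Consequently no torsion-free covariant derivative makes $F$ holonomy invariant, i.e. $(\mathbb{R}^2,F)$ is not a Berwald manifold.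
   Context: A function $F$ on $TM$ is holonomy invariant with respect to a covariant derivative $\nabla$ if $F_{\gamma(t)}\circ P^t_\gamma=F_{\gamma(0)}$ for every regular smooth curve $\gamma\colon I\to M$ ($I$ an open interval containing $0$) and every $t\in I$, where $F_p$ is the restriction of $F$ to $T_pM$ and $P^t_\gamma$ is $\nabla$-parallel translation from $\gamma(0)$ to $\gamma(t)$. A Finsler manifold $(M,F)$ is a generalized Berwald manifold if $F$ is holonomy invariant with respect to some covariant derivative on $M$, and a Berwald manifold if this covariant derivative can be chosen torsion-free. The torsion is $T^\nabla(X,Y)=\nabla_XY-\nabla_YX-[X,Y]$. *)

From Stdlib Require Import Reals.
Open Scope R_scope.

(* Coordinate indices: false = x, true = y. Vectors are  bool -> R. *)
Definition bsum (f : bool -> R) : R := f false + f true.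

Definition partial (i : bool) (f : R -> R -> R) (x y d : R) : Prop :=
  if i then derivable_pt_lim (fun s => f x s) y d
       else derivable_pt_lim (fun s => f s y) x d.

Definition continuous2 (f : R -> R -> R) (x y : R) : Prop :=
  forall eps, 0 < eps -> exists delta, 0 < delta /\
    forall x' y', Rabs (x' - x) < delta -> Rabs (y' - y) < delta ->
      Rabs (f x' y' - f x y) < eps.

Definition smooth2 (f : R -> R -> R) : Prop :=
  exists D : list bool -> R -> R -> R,
    (forall x y, D nil x y = f x y) /\
    forall l x y,
      partial false (D l) x y (D (cons false l) x y) /\
      partial true (D l) x y (D (cons true l) x y) /\
      continuous2 (D l) x y.

Definition smooth_on (a b : R) (g : R -> R) : Prop :=
  exists D : nat -> R -> R,
    (forall t, D O t = g t) /\
    forall n t, a < t < b -> derivable_pt_lim (D n) t (D (S n) t).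

(* A covariant derivative on R^2 is given by its Christoffel symbols in the
   global chart:  nabla_{d_i} d_j = sum_k Gam k i j * d_k .  *)
Definition christoffel := bool -> bool -> bool -> R -> R -> R.

Definition smooth_conn (Gam : christoffel) : Prop :=
  forall k i j, smooth2 (Gam k i j).

Definition parallel_field (Gam : christoffel) (Y : bool -> R -> R -> R) : Prop :=
  exists dY : bool -> bool -> R -> R -> R,
    (forall i k x y, partial i (Y k) x y (dY i k x y)) /\
    (forall i k x y, dY i k x y + bsum (fun j => Gam k i j x y * Y j x y) = 0).

Definition regular_curve (a b : R) (gam dgam : bool -> R -> R) : Prop :=
  (forall i, smooth_on a b (gam i)) /\
  (forall i t, a < t < b -> derivable_pt_lim (gam i) t (dgam i t)) /\
  (forall t, a < t < b -> dgam false t <> 0 \/ dgam true t <> 0).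

Definition parallel_along (Gam : christoffel) (a b : R) (gam dgam V : bool -> R -> R)
  : Prop :=
  exists dV : bool -> R -> R,
    (forall k t, a < t < b -> derivable_pt_lim (V k) t (dV k t)) /\
    (forall k t, a < t < b ->
       dV k t + bsum (fun i => bsum (fun j =>
          Gam k i j (gam false t) (gam true t) * dgam i t * V j t)) = 0).

(* Function on TR^2: F x y v1 v2 is F at the point (x,y) of v = v1 d_x + v2 d_y. *)
Definition finsler_fun := R -> R -> R -> R -> R.

(* Holonomy invariance: F_{gam t} (P^t_gam v) = F_{gam 0} v, where P^t_gam v = V t for
   the parallel field V along gam with V 0 = v. *)
Definition holonomy_invariant (Gam : christoffel) (F : finsler_fun) : Prop :=
  forall (a b : R) (gam dgam V : bool -> R -> R),
    a < 0 < b ->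
    regular_curve a b gam dgam ->
    parallel_along Gam a b gam dgam V ->
    forall t, a < t < b ->
      F (gam false t) (gam true t) (V false t) (V true t)
      = F (gam false 0) (gam true 0) (V false 0) (V true 0).

(* Torsion at (x,y) on vectors X Y:
   T(X,Y)^k = (nabla_X Y - nabla_Y X - [X,Y])^k = sum_{i,j} (Gam k i j - Gam k j i) X^i Y^j. *)
Definition torsion (Gam : christoffel) (x y : R) (X Y : bool -> R) (k : bool) : R :=
  bsum (fun i => bsum (fun j => (Gam k i j x y - Gam k j i x y) * X i * Y j)).

Definition torsion_free (Gam : christoffel) : Prop :=
  forall k i j x y, Gam k i j x y = Gam k j i x y.

Definition Efr1 (k : bool) (x y : R) : R := if k then 1 else x.
Definition Efr2 (k : bool) (x y : R) : R := if k then 0 else -1.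

Definition Frand : finsler_fun := fun x y v1 v2 =>
  sqrt (4 * v2 ^ 2 + 12 * (- v1 + x * v2) ^ 2) - v2.

From Stdlib Require Import Reals Lra Lia FunctionalExtensionality.
From Coquelicot Require Import Coquelicot.
Open Scope R_scope.

(* Let Gam_frame be the connection for which the frame E_1 = x d_x + d_y, E_2 = - d_x is
   parallel; its only nonzero Christoffel symbol is Gam^x_{xy} = -1.
   - Existence and characterization: Gam_frame is smooth, makes E_1, E_2 parallel, and
     any connection making E_1, E_2 parallel equals it.
   - Holonomy invariance: along any curve a Gam_frame-parallel field keeps the
     coefficients E^1(V), E^2(V) constant, and F depends only on them.
   - Uniqueness: given any smooth Gam with F holonomy invariant, transport a vector v
     along the coordinate line through a point in direction d_i (a linear ODE, solved
     locally by Picard iteration).  Differentiating F(P^t v) = F(v) at t = 0 yields a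
     linear relation between v and its transport velocity -Gam_i v; using it for four
     choices of v forces Gam = Gam_frame.
   - Torsion: T(E_1, E_2) = - d_x, so Gam_frame, hence every admissible connection, has
     torsion and F is not Berwald. *)

Lemma continuous_bounded_on_unit (f : R -> R) :
  (forall t, continuity_pt f t) ->
  exists M, 0 <= M /\ forall t, -1 <= t <= 1 -> Rabs (f t) <= M.
Proof.
  intros Hf.
  destruct (continuity_ab_maj (fun t => Rabs (f t)) (-1) 1) as [tmax [Hmax _]].
  - lra.
  - intros c _. apply (continuity_pt_comp f Rabs); [apply Hf | apply Rcontinuity_abs].
  - exists (Rabs (f tmax)). split; [apply Rabs_pos | exact Hmax].
Qed.

Lemma derivable_pt_lim_local (f g : R -> R) x l d : 0 < d ->
  (forall t, Rabs (t - x) < d -> g t = f t) ->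
  derivable_pt_lim f x l -> derivable_pt_lim g x l.
Proof.
  intros Hd Heq Hf eps Heps. destruct (Hf eps Heps) as [del Hdel].
  assert (Hm : 0 < Rmin del d) by (apply Rmin_pos; [apply cond_pos | lra]).
  exists (mkposreal _ Hm). intros h Hh Hh2. simpl in Hh2.
  rewrite !Heq.
  - apply Hdel; [exact Hh | eapply Rlt_le_trans; [exact Hh2 | apply Rmin_l]].
  - replace (x - x) with 0 by ring. rewrite Rabs_R0. lra.
  - replace (x + h - x) with h by ring.
    eapply Rlt_le_trans; [exact Hh2 | apply Rmin_r].
Qed.

Lemma derivable_pt_lim_ext (f g : R -> R) x l :
  (forall t, g t = f t) -> derivable_pt_lim f x l -> derivable_pt_lim g x l.
Proof. intros E. apply (derivable_pt_lim_local f g x l 1); [lra | intros; apply E]. Qed.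

Lemma derivative_of_const (c d x : R) : derivable_pt_lim (fun _ => c) x d -> d = 0.
Proof. intros H. eapply uniqueness_limite; [exact H | apply derivable_pt_lim_const]. Qed.

Lemma derivative_of_id (d x : R) : derivable_pt_lim (fun s => s) x d -> d = 1.
Proof. intros H. eapply uniqueness_limite; [exact H | apply derivable_pt_lim_id]. Qed.

Lemma zero_derivative_constant (a b : R) (f : R -> R) : a < 0 < b ->
  (forall t, a < t < b -> derivable_pt_lim f t 0) ->
  forall t, a < t < b -> f t = f 0.
Proof.
  intros Hab Hd t Ht. destruct (Rtotal_order t 0) as [H | [H | H]].
  - destruct (MVT_cor2 f (fun _ => 0) t 0 H) as [c [Hc _]];
      [intros c Hc; apply Hd; lra | lra].
  - subst. reflexivity.
  - destruct (MVT_cor2 f (fun _ => 0) 0 t H) as [c [Hc _]];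
      [intros c Hc; apply Hd; lra | lra].
Qed.

Lemma RInt_derivative (f : R -> R) : (forall t, continuity_pt f t) ->
  forall t, derivable_pt_lim (fun t => RInt f 0 t) t (f t).
Proof.
  intros Hf t. apply is_derive_Reals.
  apply (is_derive_RInt f (fun t => RInt f 0 t) 0 t).
  - apply filter_forall. intros x. apply (@RInt_correct R_CompleteNormedModule).
    apply (@ex_RInt_continuous R_CompleteNormedModule).
    intros z _. apply continuity_pt_filterlim. apply Hf.
  - apply continuity_pt_filterlim. apply Hf.
Qed.

Lemma RInt_abs_bound (f : R -> R) (t M : R) : (forall s, continuity_pt f s) ->
  (forall s, Rabs s <= Rabs t -> Rabs (f s) <= M) ->
  Rabs (RInt f 0 t) <= Rabs t * M.
Proof.
  intros Hc Hb.
  assert (Hex : forall a b, ex_RInt f a b).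
  { intros a b. apply (@ex_RInt_continuous R_CompleteNormedModule).
    intros z _. apply continuity_pt_filterlim. apply Hc. }
  destruct (Rle_lt_dec 0 t) as [Ht | Ht].
  - rewrite (Rabs_right t) by lra.
    replace (t * M) with ((t - 0) * M) by ring.
    apply abs_RInt_le_const; auto.
    intros s Hs. apply Hb. rewrite !Rabs_right by lra. lra.
  - rewrite <- opp_RInt_swap by auto. unfold opp; simpl.
    rewrite Rabs_Ropp, (Rabs_left t) by lra.
    replace (- t * M) with ((0 - t) * M) by ring.
    apply abs_RInt_le_const; auto; [lra |].
    intros s Hs. apply Hb. rewrite (Rabs_left t) by lra.
    unfold Rabs; destruct (Rcase_abs s); lra.
Qed.

Lemma Un_cv_const (c : R) : Un_cv (fun _ : nat => c) c.
Proof.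
  intros eps He. exists O. intros. unfold Rdist.
  replace (c - c) with 0 by ring. rewrite Rabs_R0. lra.
Qed.

Lemma Un_cv_shift (u : nat -> R) l : Un_cv u l -> Un_cv (fun n => u (S n)) l.
Proof. intros H eps He. destruct (H eps He) as [N HN]. exists N. intros n Hn. apply HN. lia. Qed.

Lemma geometric_half_cv (c : R) : 0 <= c ->
  {l | Un_cv (fun n => sum_f_R0 (fun i => Rabs (c * (/2) ^ i)) n) l}.
Proof.
  intros Hc. exists (c * / (1 - /2)).
  assert (Hg : Un_cv (fun n => sum_f_R0 (fun i => 1 * (/2) ^ i) n) (/ (1 - /2)))
    by (apply (GP_infinite (/2)); rewrite Rabs_right; lra).
  assert (HH := CV_mult _ _ _ _ (Un_cv_const c) Hg).
  intros eps He. destruct (HH eps He) as [N HN]. exists N. intros n Hn.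
  replace (sum_f_R0 (fun i => Rabs (c * (/2) ^ i)) n)
    with (c * sum_f_R0 (fun i => 1 * (/2) ^ i) n).
  - apply HN, Hn.
  - rewrite scal_sum. apply sum_eq. intros i _.
    rewrite Rabs_right; [ring | apply Rle_ge, Rmult_le_pos; [auto | apply pow_le; lra]].
Qed.

(* Clamping the time variable lets us work with series that converge on all of R. *)
Definition clamp (r t : R) : R := Rmax (- r) (Rmin r t).

Lemma clamp_abs r t : 0 <= r -> Rabs (clamp r t) <= r.
Proof.
  intros. unfold clamp, Rmax, Rmin.
  destruct (Rle_dec r t); destruct (Rle_dec (- r) _); unfold Rabs; destruct (Rcase_abs _); lra.
Qed.

Lemma clamp_id r t : Rabs t <= r -> clamp r t = t.
Proof.
  unfold clamp, Rmax, Rmin, Rabs.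
  destruct (Rcase_abs t); destruct (Rle_dec r t); destruct (Rle_dec (- r) _); intros; lra.
Qed.

(** * Local existence for linear ODEs  S' = b(t) S  in R^2 (Picard iteration) *)

Section LinearODE.

Variable b : bool -> bool -> R -> R.
Hypothesis b_cont : forall k j t, continuity_pt (b k j) t.
Variable v : bool -> R.

Definition linear_rhs (W : bool -> R -> R) (k : bool) (t : R) : R :=
  bsum (fun j => b k j t * W j t).

(* Picard terms: W_0 = v and W_(n+1)(t) = int_0^t b W_n; their sum solves the ODE. *)
Fixpoint picard (n : nat) : bool -> R -> R :=
  match n with
  | O => fun k _ => v k
  | S n' => fun k t => RInt (linear_rhs (picard n') k) 0 t
  end.

Lemma linear_rhs_continuous (W : bool -> R -> R) k :
  (forall j t, continuity_pt (W j) t) -> forall t, continuity_pt (linear_rhs W k) t.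
Proof.
  intros HW t. unfold linear_rhs, bsum.
  apply (continuity_pt_plus (fun s => b k false s * W false s) (fun s => b k true s * W true s));
    apply continuity_pt_mult; auto.
Qed.

Lemma picard_regular n :
  (forall k t, continuity_pt (picard n k) t) /\
  (forall k t, derivable_pt_lim (picard (S n) k) t (linear_rhs (picard n) k t)).
Proof.
  assert (Hstep : forall n, (forall k t, continuity_pt (picard n k) t) ->
            forall k t, derivable_pt_lim (picard (S n) k) t (linear_rhs (picard n) k t)).
  { intros m Hc k t. apply RInt_derivative, linear_rhs_continuous, Hc. }
  induction n as [| n [IHc IHd]].
  - assert (Hc : forall k t, continuity_pt (picard 0 k) t)
      by (intros k t; apply continuity_pt_const; intros x y; reflexivity).
    split; [exact Hc | apply Hstep, Hc].
  - assert (Hc : forall k t, continuity_pt (picard (S n) k) t)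
      by (intros k t; apply derivable_continuous_pt; eexists; apply IHd).
    split; [exact Hc | apply Hstep, Hc].
Qed.

Definition norm1 (w : bool -> R) : R := Rabs (w false) + Rabs (w true).

Lemma norm1_nonneg w : 0 <= norm1 w.
Proof. unfold norm1. pose proof (Rabs_pos (w false)). pose proof (Rabs_pos (w true)). lra. Qed.

Section Bounds.

Variables K r : R.
Hypothesis K_bound : forall k j t, Rabs t <= r -> Rabs (b k j t) <= K.
Hypothesis r_nonneg : 0 <= r.
Hypothesis r_small : 2 * K * r <= / 2.

Lemma linear_rhs_bound (W : bool -> R -> R) k t M :
  Rabs t <= r -> (forall j, Rabs (W j t) <= M) -> Rabs (linear_rhs W k t) <= 2 * K * M.
Proof.
  intros Ht HW. unfold linear_rhs, bsum.
  eapply Rle_trans; [apply Rabs_triang | rewrite !Rabs_mult].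
  assert (Hj : forall j, Rabs (b k j t) * Rabs (W j t) <= K * M)
    by (intros j; apply Rmult_le_compat; auto using Rabs_pos).
  pose proof (Hj false). pose proof (Hj true). lra.
Qed.

Lemma picard_bound n k t : Rabs t <= r -> Rabs (picard n k t) <= norm1 v * (/2) ^ n.
Proof.
  revert k t. induction n as [| n IH]; intros k t Ht.
  - simpl. unfold norm1. pose proof (Rabs_pos (v false)).
    pose proof (Rabs_pos (v true)). destruct k; lra.
  - set (m := norm1 v * (/2) ^ n).
    assert (Hm : 0 <= m) by (apply Rmult_le_pos; [apply norm1_nonneg | apply pow_le; lra]).
    assert (Hint : Rabs (picard (S n) k t) <= Rabs t * (2 * K * m)).
    { apply RInt_abs_bound.
      - apply linear_rhs_continuous, picard_regular.
      - intros s Hs. apply linear_rhs_bound; [lra | intros j; apply IH; lra]. }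
    assert (HK : 0 <= K) by (specialize (K_bound false false 0 ltac:(rewrite Rabs_R0; lra));
                             pose proof (Rabs_pos (b false false 0)); lra).
    assert (Rabs t * (2 * K * m) <= r * (2 * K * m))
      by (apply Rmult_le_compat_r; [apply Rmult_le_pos; lra | exact Ht]).
    assert ((2 * K * r) * m <= / 2 * m) by (apply Rmult_le_compat_r; auto).
    simpl pow. unfold m in *. lra.
Qed.

Definition picard_clamped (n : nat) (k : bool) (t : R) : R := picard n k (clamp r t).

Definition picard_clamped_deriv (n : nat) (k : bool) (t : R) : R :=
  match n with
  | O => 0
  | S n' => bsum (fun j => b k j (clamp r t) * picard_clamped n' j t)
  end.

Lemma picard_clamped_cvn k : CVN_R (fun n t => picard_clamped n k t).
Proof.
  intros rr. exists (fun n => norm1 v * (/2) ^ n).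
  destruct (geometric_half_cv _ (norm1_nonneg v)) as [l Hl].
  exists l. split; [exact Hl |].
  intros n y _. apply picard_bound, clamp_abs, r_nonneg.
Qed.

Lemma picard_clamped_deriv_cvn k : CVN_R (fun n t => picard_clamped_deriv n k t).
Proof.
  intros rr. assert (HK : 0 <= 2 * K * norm1 v * 2).
  { pose proof (K_bound false false 0 ltac:(rewrite Rabs_R0; lra)).
    pose proof (Rabs_pos (b false false 0)). pose proof (norm1_nonneg v). nra. }
  exists (fun n => (2 * K * norm1 v * 2) * (/2) ^ n).
  destruct (geometric_half_cv _ HK) as [l Hl].
  exists l. split; [exact Hl |].
  intros [| n] y _; simpl.
  - rewrite Rabs_R0. lra.
  - replace (2 * K * norm1 v * 2 * (/ 2 * (/ 2) ^ n)) with (2 * K * (norm1 v * (/2) ^ n))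
      by field.
    apply (linear_rhs_bound (fun j _ => picard_clamped n j y) k (clamp r y));
      [apply clamp_abs, r_nonneg |].
    intros j. apply picard_bound, clamp_abs, r_nonneg.
Qed.

Lemma picard_clamped_deriv_partial_sum k x N :
  sum_f_R0 (fun i => picard_clamped_deriv i k x) (S N) =
  bsum (fun j => b k j (clamp r x) * sum_f_R0 (fun i => picard_clamped i j x) N).
Proof.
  induction N as [| N IH].
  - simpl. unfold bsum. ring.
  - change (sum_f_R0 (fun i => picard_clamped_deriv i k x) (S (S N))) with
      (sum_f_R0 (fun i => picard_clamped_deriv i k x) (S N) + picard_clamped_deriv (S (S N)) k x).
    rewrite IH. simpl. unfold bsum. ring.
Qed.

Definition picard_sum (k : bool) : R -> R := SFL _ (CVN_R_CVS _ (picard_clamped_cvn k)).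

Lemma picard_sum_cv k x :
  Un_cv (fun N => sum_f_R0 (fun i => picard_clamped i k x) N) (picard_sum k x).
Proof. unfold picard_sum, SFL. destruct (CVN_R_CVS _ _ x) as [l Hl]. exact Hl. Qed.

Lemma picard_sum_init k : picard_sum k 0 = v k.
Proof.
  eapply UL_sequence; [apply picard_sum_cv |].
  assert (E : forall N, sum_f_R0 (fun i => picard_clamped i k 0) N = v k).
  { induction N as [| N IH]; [reflexivity |]. simpl. rewrite IH. unfold picard_clamped.
    rewrite (clamp_id r 0) by (rewrite Rabs_R0; lra).
    simpl. rewrite RInt_point. unfold zero. simpl. ring. }
  eapply Un_cv_ext; [| apply (Un_cv_const (v k))]. intros N. symmetry. apply E.
Qed.

(* Term-by-term differentiation (uniform convergence of the derivative series). *)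
Lemma picard_sum_solves k t : Rabs t < r ->
  derivable_pt_lim (picard_sum k) t (linear_rhs picard_sum k t).
Proof.
  intros Ht. assert (Hr : 0 < r) by (pose proof (Rabs_pos t); lra).
  set (rp := mkposreal r Hr).
  apply (CVU_derivable (SP (fun n t => picard_clamped n k t))
           (SP (fun n t => picard_clamped_deriv n k t)) (picard_sum k)
           (linear_rhs picard_sum k) 0 rp).
  - apply CVU_ext_lim with (SFL _ (CVN_R_CVS _ (picard_clamped_deriv_cvn k))).
    + apply CVN_CVU, picard_clamped_deriv_cvn.
    + intros x Hx. unfold Boule in Hx. simpl in Hx. rewrite Rminus_0_r in Hx.
      unfold SFL. destruct (CVN_R_CVS _ _ x) as [L HL]. simpl.
      eapply UL_sequence; [apply Un_cv_shift, HL |].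
      unfold SP. eapply Un_cv_ext.
      { intros N. symmetry. apply picard_clamped_deriv_partial_sum. }
      rewrite (clamp_id r x) by lra. unfold linear_rhs, bsum.
      apply CV_plus; apply CV_mult; try apply Un_cv_const; apply picard_sum_cv.
  - intros x _. apply picard_sum_cv.
  - intros n x Hx. unfold Boule in Hx. simpl in Hx. rewrite Rminus_0_r in Hx.
    induction n as [| n IH].
    + unfold SP, picard_clamped, picard_clamped_deriv. simpl. apply derivable_pt_lim_const.
    + unfold SP. simpl.
      apply (derivable_pt_lim_plus (fun x => sum_f_R0 (fun i => picard_clamped i k x) n)
               (picard_clamped (S n) k)); [exact IH |].
      apply (derivable_pt_lim_local (picard (S n) k) _ x _ (r - Rabs x)); [lra | |].
      * intros s Hs. unfold picard_clamped. rewrite clamp_id; [reflexivity |].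
        pose proof (Rabs_triang_inv s x). lra.
      * unfold picard_clamped. rewrite (clamp_id r x) by lra. apply picard_regular.
  - unfold Boule. simpl. rewrite Rminus_0_r. exact Ht.
Qed.

End Bounds.

Lemma linear_ode_local_solution :
  exists r, 0 < r /\ exists S : bool -> R -> R, (forall k, S k 0 = v k) /\
    forall k t, Rabs t < r -> derivable_pt_lim (S k) t (linear_rhs S k t).
Proof.
  destruct (continuous_bounded_on_unit _ (b_cont false false)) as [M1 [P1 Q1]].
  destruct (continuous_bounded_on_unit _ (b_cont false true)) as [M2 [P2 Q2]].
  destruct (continuous_bounded_on_unit _ (b_cont true false)) as [M3 [P3 Q3]].
  destruct (continuous_bounded_on_unit _ (b_cont true true)) as [M4 [P4 Q4]].
  set (K := M1 + M2 + M3 + M4). set (r := / (4 * (K + 1))).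
  assert (Hr : 0 < r) by (unfold r; apply Rinv_0_lt_compat; unfold K; lra).
  assert (Hr1 : r * (4 * (K + 1)) = 1) by (unfold r; field; unfold K; lra).
  assert (HK : forall k j t, Rabs t <= r -> Rabs (b k j t) <= K).
  { intros k j t Ht.
    assert (Ht' : -1 <= t <= 1) by (unfold Rabs in Ht; destruct (Rcase_abs t); unfold K in *; nra).
    destruct k, j; [apply Q4 in Ht' | apply Q3 in Ht' | apply Q2 in Ht' | apply Q1 in Ht'];
      unfold K; lra. }
  assert (Hsmall : 2 * K * r <= / 2) by (unfold K in *; nra).
  exists r. split; [exact Hr |]. exists (picard_sum K r HK (Rlt_le _ _ Hr) Hsmall).
  split; [apply picard_sum_init | intros k t Ht; apply picard_sum_solves, Ht].
Qed.

End LinearODE.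

(** * The connection with parallel frame E_1, E_2 *)

(* Its Christoffel symbols: nabla_{d_x} d_y = - d_x, all others vanish. *)
Definition Gam_frame : christoffel :=
  fun k i j _ _ => if j then (if k then 0 else if i then 0 else -1) else 0.

Lemma const_smooth2 (c : R) : smooth2 (fun _ _ => c).
Proof.
  exists (fun l _ _ => match l with nil => c | _ => 0 end). split; [reflexivity |].
  intros l x y. split; [| split].
  - unfold partial. destruct l; apply derivable_pt_lim_const.
  - unfold partial. destruct l; apply derivable_pt_lim_const.
  - intros eps He. exists 1. split; [lra |]. intros.
    replace (_ - _) with 0 by (destruct l; ring). rewrite Rabs_R0. lra.
Qed.

Lemma Gam_frame_smooth : smooth_conn Gam_frame.
Proof. intros k i j. unfold Gam_frame. destruct j, k, i; apply const_smooth2. Qed.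

Lemma Gam_frame_parallel_E1 : parallel_field Gam_frame Efr1.
Proof.
  exists (fun (i k : bool) (_ _ : R) => if k then 0 else if i then 0 else 1). split.
  - intros i k x y. unfold partial, Efr1. destruct i, k; simpl;
      first [apply derivable_pt_lim_const | apply derivable_pt_lim_id].
  - intros i k x y. unfold bsum, Gam_frame, Efr1. destruct i, k; simpl; ring.
Qed.

Lemma Gam_frame_parallel_E2 : parallel_field Gam_frame Efr2.
Proof.
  exists (fun (_ _ : bool) (_ _ : R) => 0). split.
  - intros i k x y. unfold partial, Efr2. destruct i, k; simpl; apply derivable_pt_lim_const.
  - intros i k x y. unfold bsum, Gam_frame, Efr2. destruct i, k; simpl; ring.
Qed.

Lemma parallel_frame_determines (Gam : christoffel) :
  parallel_field Gam Efr1 -> parallel_field Gam Efr2 ->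
  forall k i j x y, Gam k i j x y = Gam_frame k i j x y.
Proof.
  intros [d1 [P1 E1]] [d2 [P2 E2]] k i j x y.
  assert (Z2 : d2 i k x y = 0).
  { specialize (P2 i k x y). unfold partial, Efr2 in P2.
    destruct i, k; eapply derivative_of_const; exact P2. }
  assert (Z1 : d1 i k x y = if k then 0 else if i then 0 else 1).
  { specialize (P1 i k x y). unfold partial, Efr1 in P1. destruct i, k;
      first [eapply derivative_of_const; exact P1 | eapply derivative_of_id; exact P1]. }
  specialize (E1 i k x y). specialize (E2 i k x y). unfold bsum, Efr1, Efr2 in *.
  rewrite Z1 in E1. rewrite Z2 in E2.
  assert (Hx : Gam k i false x y = 0) by (destruct k, i; simpl in E2; lra).
  rewrite Hx in E1. unfold Gam_frame. destruct j, k, i; simpl in E1; lra.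
Qed.

(* Along any curve, the Gam_frame-parallel fields preserve E^1(V) = V^y and
   E^2(V) = -V^x + x V^y, hence F(V). *)
Lemma Gam_frame_holonomy_invariant : holonomy_invariant Gam_frame Frand.
Proof.
  intros a b gam dgam V Hab [_ [Hg _]] [dV [HV HE]] t Ht.
  assert (Ey : forall s, a < s < b -> dV true s = 0).
  { intros s Hs. specialize (HE true s Hs). unfold bsum, Gam_frame in HE. simpl in HE. lra. }
  assert (Ex : forall s, a < s < b -> dV false s = dgam false s * V true s).
  { intros s Hs. specialize (HE false s Hs). unfold bsum, Gam_frame in HE. simpl in HE. lra. }
  assert (E1_const : V true t = V true 0).
  { apply (zero_derivative_constant a b); auto.
    intros s Hs. rewrite <- (Ey s Hs). apply HV, Hs. }
  assert (E2_const : V false t - gam false t * V true t = V false 0 - gam false 0 * V true 0).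
  { apply (zero_derivative_constant a b (fun s => V false s - gam false s * V true s)); auto.
    intros s Hs.
    replace 0 with (dV false s - (dgam false s * V true s + gam false s * dV true s))
      by (rewrite Ex, Ey by auto; ring).
    apply (derivable_pt_lim_minus (V false) (fun s => gam false s * V true s)); [apply HV; auto |].
    apply (derivable_pt_lim_mult (gam false) (V true)); [apply Hg | apply HV]; auto. }
  unfold Frand. rewrite E1_const in E2_const |- *.
  replace (- V false t + gam false t * V true 0) with (- V false 0 + gam false 0 * V true 0)
    by lra.
  reflexivity.
Qed.

(** * Holonomy invariance along coordinate lines *)

Definition coord_line (x0 y0 : R) (i0 : bool) (i : bool) (t : R) : R :=
  if i then y0 + (if i0 then t else 0) else x0 + (if i0 then 0 else t).

Definition coord_velocity (i0 : bool) (i : bool) (_ : R) : R :=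
  if Bool.eqb i i0 then 1 else 0.

Lemma coord_line_derivative x0 y0 i0 i t :
  derivable_pt_lim (coord_line x0 y0 i0 i) t (coord_velocity i0 i t).
Proof.
  assert (Hmove : forall c, derivable_pt_lim (fun t => c + t) t 1).
  { intros c. replace 1 with (0 + 1) by ring.
    apply (derivable_pt_lim_plus (fun _ => c) (fun t => t));
      [apply derivable_pt_lim_const | apply derivable_pt_lim_id]. }
  unfold coord_line, coord_velocity. destruct i, i0; simpl;
    first [apply Hmove | apply derivable_pt_lim_const].
Qed.

Lemma coord_line_regular x0 y0 i0 a b : regular_curve a b (coord_line x0 y0 i0) (coord_velocity i0).
Proof.
  split; [| split].
  - intros i. exists (fun n t => match n with
                              | O => coord_line x0 y0 i0 i t
                              | S O => coord_velocity i0 i t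
                              | _ => 0 end).
    split; [reflexivity |]. intros [| [| n]] t _.
    + apply coord_line_derivative.
    + apply derivable_pt_lim_const.
    + apply derivable_pt_lim_const.
  - intros i t _. apply coord_line_derivative.
  - intros t _. unfold coord_velocity. destruct i0; simpl; [right | left]; lra.
Qed.

Lemma smooth2_continuous (f : R -> R -> R) : smooth2 f -> forall x y, continuous2 f x y.
Proof.
  intros [D [H0 H]] x y.
  assert (E : D nil = f) by (do 2 (apply functional_extensionality; intro); apply H0).
  rewrite <- E. apply H.
Qed.

Lemma continuous2_along_coord_line (f : R -> R -> R) x0 y0 i0 :
  (forall x y, continuous2 f x y) ->
  forall t, continuity_pt (fun t => f (coord_line x0 y0 i0 false t) (coord_line x0 y0 i0 true t)) t.
Proof.
  intros Hc t eps He.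
  destruct (Hc (coord_line x0 y0 i0 false t) (coord_line x0 y0 i0 true t) eps He)
    as [d [Hd H]].
  exists d. split; [exact Hd |]. intros s [_ Hs]. simpl in *. unfold R_dist in *.
  assert (Hfixed : forall a, Rabs (a + 0 - (a + 0)) < d)
    by (intros a; replace (a + 0 - (a + 0)) with 0 by ring; rewrite Rabs_R0; exact Hd).
  assert (Hmoving : forall a, Rabs (a + s - (a + t)) < d)
    by (intros a; replace (a + s - (a + t)) with (s - t) by ring; exact Hs).
  unfold coord_line in *. destruct i0; apply H; auto.
Qed.

(* The initial velocity of the parallel transport of v along the d_{i0}-line:
   w^k = - sum_j Gam^k_{i0 j} v^j. *)
Definition transport_velocity (Gam : christoffel) (i0 : bool) (x0 y0 : R) (v : bool -> R)
  (k : bool) : R :=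
  - bsum (fun j => Gam k i0 j x0 y0 * v j).

Lemma coord_line_transport_exists (Gam : christoffel) x0 y0 i0 (v : bool -> R) :
  smooth_conn Gam ->
  exists r, 0 < r /\ exists S : bool -> R -> R,
    (forall k, S k 0 = v k) /\
    parallel_along Gam (- r) r (coord_line x0 y0 i0) (coord_velocity i0) S /\
    (forall k, derivable_pt_lim (S k) 0 (transport_velocity Gam i0 x0 y0 v k)).
Proof.
  intros Hsm.
  set (bb := fun k j t => - Gam k i0 j (coord_line x0 y0 i0 false t) (coord_line x0 y0 i0 true t)).
  assert (Hbb : forall k j t, continuity_pt (bb k j) t).
  { intros k j t. apply continuity_pt_opp, continuous2_along_coord_line, smooth2_continuous, Hsm. }
  destruct (linear_ode_local_solution bb Hbb v) as [r [Hr [S [HS0 HSd]]]].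
  exists r. split; [exact Hr |]. exists S. split; [exact HS0 | split].
  - exists (linear_rhs bb S). split.
    + intros k t Ht. apply HSd. unfold Rabs; destruct (Rcase_abs t); lra.
    + intros k t Ht. unfold linear_rhs, bb, coord_velocity, bsum. destruct i0; simpl; ring.
  - intros k. replace (transport_velocity Gam i0 x0 y0 v k) with (linear_rhs bb S k 0).
    + apply HSd. rewrite Rabs_R0. exact Hr.
    + unfold linear_rhs, transport_velocity, bb, coord_line, bsum.
      rewrite !HS0. destruct i0; rewrite !Rplus_0_r; ring.
Qed.

(* F(v) = c means that  4 (E^1 v)^2 + 12 (E^2 v)^2 - (c + E^1 v)^2  vanishes. *)
Definition randers_defect (c x v1 v2 : R) : R :=
  4 * v2 ^ 2 + 12 * (- v1 + x * v2) ^ 2 - (c + v2) ^ 2.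

Lemma Frand_level_set x y v1 v2 c : Frand x y v1 v2 = c -> randers_defect c x v1 v2 = 0.
Proof.
  unfold Frand, randers_defect. intros HF.
  set (Q := 4 * v2 ^ 2 + 12 * (- v1 + x * v2) ^ 2) in *.
  assert (HQ : 0 <= Q)
    by (unfold Q; pose proof (pow2_ge_0 v2); pose proof (pow2_ge_0 (- v1 + x * v2)); lra).
  replace (c + v2) with (sqrt Q) by lra.
  replace (sqrt Q ^ 2) with (sqrt Q * sqrt Q) by ring. rewrite sqrt_sqrt by exact HQ. ring.
Qed.

Lemma randers_defect_derivative (A B G : R -> R) a' b' g' c t :
  derivable_pt_lim A t a' -> derivable_pt_lim B t b' -> derivable_pt_lim G t g' ->
  derivable_pt_lim (fun t => randers_defect c (G t) (A t) (B t)) t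
    (8 * B t * b' + 24 * (- A t + G t * B t) * (- a' + g' * B t + G t * b')
     - 2 * (c + B t) * b').
Proof.
  intros HA HB HG.
  set (w := fun t => - A t + G t * B t).
  assert (Hw : derivable_pt_lim w t (- a' + (g' * B t + G t * b'))).
  { apply (derivable_pt_lim_plus (fun t => - A t) (fun t => G t * B t));
      [apply (derivable_pt_lim_opp A), HA | apply (derivable_pt_lim_mult G B); auto]. }
  assert (Hcb : derivable_pt_lim (fun t => c + B t) t (0 + b'))
    by (apply (derivable_pt_lim_plus (fun _ => c) B); [apply derivable_pt_lim_const | exact HB]).
  apply (derivable_pt_lim_ext
           (fun t => 4 * (B t * B t) + 12 * (w t * w t) - (c + B t) * (c + B t))).
  { intros s. unfold randers_defect, w. ring. }
  replace (8 * B t * b' + 24 * (- A t + G t * B t) * (- a' + g' * B t + G t * b')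
           - 2 * (c + B t) * b')
    with (4 * (b' * B t + B t * b')
          + 12 * ((- a' + (g' * B t + G t * b')) * w t + w t * (- a' + (g' * B t + G t * b')))
          - ((0 + b') * (c + B t) + (c + B t) * (0 + b'))) by (unfold w; ring).
  apply (derivable_pt_lim_minus (fun t => 4 * (B t * B t) + 12 * (w t * w t))
           (fun t => (c + B t) * (c + B t))).
  - apply (derivable_pt_lim_plus (fun t => 4 * (B t * B t)) (fun t => 12 * (w t * w t))).
    + apply (derivable_pt_lim_scal (fun t => B t * B t)), (derivable_pt_lim_mult B B); auto.
    + apply (derivable_pt_lim_scal (fun t => w t * w t)), (derivable_pt_lim_mult w w); auto.
  - apply (derivable_pt_lim_mult (fun t => c + B t) (fun t => c + B t)); auto.
Qed.

(* First-order consequence of holonomy invariance: differentiating F(P^t v) = F(v)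
   at t = 0 along the d_{i0}-line gives a linear relation between v and the
   initial velocity w of its parallel transport. *)
Lemma holonomy_first_order (Gam : christoffel) :
  smooth_conn Gam -> holonomy_invariant Gam Frand ->
  forall x0 y0 (i0 : bool) (v : bool -> R),
  let w := transport_velocity Gam i0 x0 y0 v in
  8 * v true * w true
  + 24 * (- v false + x0 * v true) * (- w false + coord_velocity i0 false 0 * v true + x0 * w true)
  = 2 * sqrt (4 * v true ^ 2 + 12 * (- v false + x0 * v true) ^ 2) * w true.
Proof.
  intros Hsm Hh x0 y0 i0 v w.
  destruct (coord_line_transport_exists Gam x0 y0 i0 v Hsm) as [r [Hr [S [HS0 [Hpar HSd]]]]].
  set (gam := coord_line x0 y0 i0).
  set (c := Frand (gam false 0) (gam true 0) (S false 0) (S true 0)).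
  assert (Hdefect : forall t, Rabs (t - 0) < r ->
            0 = randers_defect c (gam false t) (S false t) (S true t)).
  { intros t Ht. rewrite Rminus_0_r in Ht. symmetry. apply (Frand_level_set _ (gam true t)).
    apply (Hh (- r) r gam (coord_velocity i0) S); [lra | apply coord_line_regular | exact Hpar |].
    unfold Rabs in Ht. destruct (Rcase_abs t); lra. }
  assert (Hder := randers_defect_derivative (S false) (S true) (gam false) _ _ _ c 0
                    (HSd false) (HSd true) (coord_line_derivative x0 y0 i0 false 0)).
  apply (derivable_pt_lim_local _ (fun _ => 0) 0 _ r Hr Hdefect), derivative_of_const in Hder.
  assert (Hc : c + v true = sqrt (4 * v true ^ 2 + 12 * (- v false + x0 * v true) ^ 2)).
  { unfold c, Frand, gam, coord_line. rewrite !HS0. destruct i0; rewrite Rplus_0_r; ring. }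
  rewrite <- Hc. fold w in Hder. rewrite !HS0 in Hder.
  unfold gam, coord_line in Hder. destruct i0; rewrite Rplus_0_r in Hder; lra.
Qed.

Lemma sqrt_of_square a b : 0 <= b -> a = b * b -> sqrt a = b.
Proof. intros Hb ->. apply sqrt_square, Hb. Qed.

(* Testing the first-order condition on E_1, E_2, E_1 + E_2 and E_1 - E_2 pins down
   every Christoffel symbol: F is holonomy invariant only for Gam_frame. *)
Lemma holonomy_invariant_unique (Gam : christoffel) :
  smooth_conn Gam -> holonomy_invariant Gam Frand ->
  forall k i j x y, Gam k i j x y = Gam_frame k i j x y.
Proof.
  intros Hs Hh k i j x0 y0.
  assert (K1 := holonomy_first_order Gam Hs Hh x0 y0 i (fun k => if k then 1 else x0)).
  assert (K2 := holonomy_first_order Gam Hs Hh x0 y0 i (fun k => if k then 0 else -1)).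
  assert (K3 := holonomy_first_order Gam Hs Hh x0 y0 i (fun k => if k then 1 else x0 - 1)).
  assert (K4 := holonomy_first_order Gam Hs Hh x0 y0 i (fun k => if k then 1 else x0 + 1)).
  simpl in K1, K2, K3, K4. unfold transport_velocity, bsum in *.
  rewrite (sqrt_of_square _ 2) in K1 by (lra || ring).
  rewrite (sqrt_of_square _ 4) in K3 by (lra || ring).
  rewrite (sqrt_of_square _ 4) in K4 by (lra || ring).
  set (q := sqrt _) in K2.
  assert (Hq : 0 < q) by (apply sqrt_lt_R0; nra).
  set (A := Gam false i false x0 y0) in *. set (B := Gam false i true x0 y0) in *.
  set (C := Gam true i false x0 y0) in *. set (D := Gam true i true x0 y0) in *.
  set (e := coord_velocity i false 0) in *.
  assert (HAC : A = x0 * C) by lra.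
  assert (HC : C = 0).
  { rewrite HAC in K2. assert (Hprod : q * C = 0) by lra.
    apply Rmult_integral in Hprod. destruct Hprod; lra. }
  assert (HA : A = 0) by (rewrite HAC, HC; ring).
  rewrite HA, HC in *.
  assert (HD : D = 0) by lra.
  rewrite HD in *.
  assert (HB : B = - e) by lra.
  unfold Gam_frame. destruct k, j; fold A B C D; try lra.
  rewrite HB. unfold e, coord_velocity. destruct i; simpl; ring.
Qed.

Lemma Gam_frame_torsion x y :
  torsion Gam_frame x y (fun k => Efr1 k x y) (fun k => Efr2 k x y) false = -1 /\
  torsion Gam_frame x y (fun k => Efr1 k x y) (fun k => Efr2 k x y) true = 0.
Proof. unfold torsion, bsum, Gam_frame, Efr1, Efr2; simpl; split; ring. Qed.

Theorem mainTheorem8 :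
  (exists Gam0 : christoffel,
      smooth_conn Gam0 /\ parallel_field Gam0 Efr1 /\ parallel_field Gam0 Efr2) /\
  (forall Gam0 : christoffel,
      smooth_conn Gam0 -> parallel_field Gam0 Efr1 -> parallel_field Gam0 Efr2 ->
      holonomy_invariant Gam0 Frand /\
      (forall Gam : christoffel, smooth_conn Gam -> holonomy_invariant Gam Frand ->
         forall k i j x y, Gam k i j x y = Gam0 k i j x y) /\
      (forall x y, torsion Gam0 x y (fun k => Efr1 k x y) (fun k => Efr2 k x y) false = -1 /\
                   torsion Gam0 x y (fun k => Efr1 k x y) (fun k => Efr2 k x y) true = 0)) /\
  (forall Gam : christoffel, smooth_conn Gam -> torsion_free Gam ->
      ~ holonomy_invariant Gam Frand).
Proof.
  split; [| split].
  - exists Gam_frame.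
    split; [apply Gam_frame_smooth |].
    split; [apply Gam_frame_parallel_E1 | apply Gam_frame_parallel_E2].
  - intros Gam0 Hs P1 P2.
    assert (E : Gam0 = Gam_frame).
    { do 5 (apply functional_extensionality; intro). apply parallel_frame_determines; auto. }
    subst Gam0. split; [apply Gam_frame_holonomy_invariant | split].
    + apply holonomy_invariant_unique.
    + apply Gam_frame_torsion.
  - (* Gam_frame is not symmetric: Gam^x_{xy} = -1 but Gam^x_{yx} = 0. *)
    intros Gam Hs Hsym Hh. specialize (Hsym false false true 0 0).
    rewrite !(holonomy_invariant_unique Gam Hs Hh) in Hsym.
    unfold Gam_frame in Hsym. simpl in Hsym. lra.
Qed.
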